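(* Let $B$ be a ring, $\phi\in\operatorname{Aut}B$, $\delta:=\phi-\mathrm{id}$, and $\operatorname{pl}(\phi):=\delta(B)\cap B^{\phi}$. (i) If $a\in\operatorname{pl}(\phi)$ is not a zero-divisor of $B$ and $\delta(B)\subset aB$, then $\operatorname{pl}(\phi)=aB^{\phi}$. (ii) Suppose $B$ is a UFD and $\operatorname{pl}(\phi)$ is a principal ideal of $B^{\phi}$. If $a,b\in\operatorname{pl}(\phi)\setminus\{0\}$ and a greatest common divisor $c$ of $a$ and $b$ lies in $B^{\phi}$, then $c\in\operatorname{pl}(\phi)$.
   Context: $B^{\phi}:=\{u\in B\mid\phi(u)=u\}$; $\operatorname{pl}(\phi)$ is an ideal of $B^{\phi}$ (the plinth ideal). *)

(* Commutative rings (paper's convention: "ring" = commutative ring with 1). *)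
From HB Require Import structures.
From mathcomp Require Import all_boot all_order all_algebra.
Set Implicit Arguments. Unset Strict Implicit. Unset Printing Implicit Defensive.
Import GRing.Theory.
Local Open Scope ring_scope.

Definition rdvd (R : comPzRingType) (x y : R) : Prop := exists z : R, y = x * z.

Definition is_ring_aut (R : comPzRingType) (phi : {rmorphism R -> R}) : Prop :=
  bijective phi.

Definition fixed_ring (R : comPzRingType) (phi : R -> R) (u : R) : Prop := phi u = u.

Definition delta_image (R : comPzRingType) (phi : R -> R) (u : R) : Prop :=
  exists x : R, u = phi x - x.

Definition plinth (R : comPzRingType) (phi : R -> R) (u : R) : Prop :=
  delta_image phi u /\ fixed_ring phi u.

Definition non_zero_divisor (R : comPzRingType) (a : R) : Prop :=
  forall x : R, a * x = 0 -> x = 0.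

Definition is_gcd (R : comPzRingType) (a b c : R) : Prop :=
  [/\ rdvd c a, rdvd c b & forall d : R, rdvd d a -> rdvd d b -> rdvd d c].

Definition irreducible_elt (R : idomainType) (p : R) : Prop :=
  [/\ p != 0, p \isn't a GRing.unit &
      forall x y : R, p = x * y -> x \is a GRing.unit \/ y \is a GRing.unit].

Definition prime_elt (R : idomainType) (p : R) : Prop :=
  [/\ p != 0, p \isn't a GRing.unit &
      forall x y : R, rdvd p (x * y) -> rdvd p x \/ rdvd p y].

Definition is_UFD (R : idomainType) : Prop :=
  (forall x : R, x != 0 -> x \isn't a GRing.unit ->
     exists s : seq R, (forall p, p \in s -> irreducible_elt p) /\ x = \prod_(p <- s) p)
  /\ (forall p : R, irreducible_elt p -> prime_elt p).

(* Everything rests on one cancellation: if [a] is fixed by [phi] and not a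
   zero-divisor, then [a * y] is fixed only if [y] is, since
   [a * (phi y - y) = phi (a * y) - a * y].  For (i), an element of [pl(phi)]
   lies in [delta(B)], hence in [aB], and the cofactor is fixed by
   cancellation; conversely [a * B^phi] lies in [pl(phi)] because [pl(phi)] is
   an ideal of [B^phi].  For (ii), a generator [g] of [pl(phi)] divides [a] and
   [b], hence their gcd [c = g * z], and [z] is fixed by cancellation. *)
From HB Require Import structures.
From mathcomp Require Import all_boot all_order all_algebra.
Set Implicit Arguments. Unset Strict Implicit. Unset Printing Implicit Defensive.
Import GRing.Theory.
Local Open Scope ring_scope.

Lemma idomain_non_zero_divisor (R : idomainType) (x : R) :
  x != 0 -> non_zero_divisor x.
Proof. by move=> x0 y /eqP; rewrite mulf_eq0 (negPf x0) => /eqP. Qed.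

Section Plinth.

Variables (B : comPzRingType) (phi : {rmorphism B -> B}).

Lemma fixed_ringM (x y : B) :
  fixed_ring phi x -> fixed_ring phi y -> fixed_ring phi (x * y).
Proof. by rewrite /fixed_ring rmorphM => -> ->. Qed.

Lemma fixed_ring_mulKr (a y : B) :
  non_zero_divisor a -> fixed_ring phi a ->
  fixed_ring phi (a * y) -> fixed_ring phi y.
Proof.
rewrite /fixed_ring rmorphM => nzd_a -> fix_ay.
by apply/eqP; rewrite -subr_eq0; apply/eqP/nzd_a; rewrite mulrBr fix_ay subrr.
Qed.

Lemma plinthM_fixed (a y : B) :
  plinth phi a -> fixed_ring phi y -> plinth phi (a * y).
Proof.
move=> [[x ->] fix_a] fix_y; split; last exact: fixed_ringM.
by exists (x * y); rewrite rmorphM fix_y mulrBl.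
Qed.

Lemma plinth_eq_mul_fixed (a : B) :
  plinth phi a -> non_zero_divisor a ->
  (forall x : B, rdvd a (phi x - x)) ->
  forall u : B, plinth phi u <-> exists2 y : B, fixed_ring phi y & u = a * y.
Proof.
move=> pl_a nzd_a dvd_delta u; split=> [[[x ->] fix_u] | [y fix_y ->]].
- have [y def_delta] := dvd_delta x.
  exists y => //; apply: (fixed_ring_mulKr nzd_a (proj2 pl_a)).
  by rewrite -def_delta.
- exact: plinthM_fixed.
Qed.

Lemma plinth_generator_dvd (g c : B) :
  (forall u : B, plinth phi u <-> exists2 y : B, fixed_ring phi y & u = g * y) ->
  fixed_ring phi g -> non_zero_divisor g ->
  fixed_ring phi c -> rdvd g c -> plinth phi c.
Proof.
move=> pl_gen fix_g nzd_g fix_c [z def_c]; apply/pl_gen.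
by exists z => //; apply: (fixed_ring_mulKr nzd_g fix_g); rewrite -def_c.
Qed.

End Plinth.

Theorem lemma2p6 :
  (* (i) *)
  (forall (B : comPzRingType) (phi : {rmorphism B -> B}) (a : B),
     is_ring_aut phi ->
     plinth phi a ->
     non_zero_divisor a ->
     (forall x : B, rdvd a (phi x - x)) ->
     forall u : B, plinth phi u <-> exists2 y : B, fixed_ring phi y & u = a * y)
  /\
  (* (ii) *)
  (forall (B : idomainType) (phi : {rmorphism B -> B}),
     is_ring_aut phi ->
     is_UFD B ->
     (exists2 g : B, fixed_ring phi g &
        forall u : B, plinth phi u <-> exists2 y : B, fixed_ring phi y & u = g * y) ->
     forall a b c : B,
       plinth phi a -> a != 0 ->
       plinth phi b -> b != 0 ->
       is_gcd a b c -> fixed_ring phi c ->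
       plinth phi c).
Proof.
split=> [B phi a _ | B phi _ _ [g fix_g pl_gen] a b c pl_a a0 pl_b _ [_ _ gcd_max] fix_c].
  exact: plinth_eq_mul_fixed.
have [a' _ def_a] := (pl_gen a).1 pl_a.
have [b' _ def_b] := (pl_gen b).1 pl_b.
have g0 : g != 0 by apply: contraNneq a0 => g0; rewrite def_a g0 mul0r.
apply: (plinth_generator_dvd pl_gen fix_g (idomain_non_zero_divisor g0) fix_c).
by apply: gcd_max; [exists a' | exists b'].
Qed.
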